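(* Let $M=(S,\mathrm{Act},P)$ be an MDP and $T\subseteq S$. Let $(x,r)\in[0,1]^S\times\mathbb{N}_\infty^S$ satisfy: (1) $D^{\min}_x(r)\le r$; (2) $x\le B^{\max}(x)$; (3) for all $s\in S\setminus T$, $x(s)>0$ implies $r(s)<\infty$ (inequalities pointwise). Then $\Pr^{\max}_s(\Diamond T)\ge x(s)$ for all $s\in S$.
   Context: An MDP is a tuple $M=(S,\mathrm{Act},P)$ with $S$ finite, $\mathrm{Act}$ finite, $P\colon S\times\mathrm{Act}\times S\to[0,1]$ with $\sum_{s'}P(s,a,s')\in\{0,1\}$; $\mathrm{Act}(s)=\{a\mid\sum_{s'}P(s,a,s')=1\}$ is nonempty for all $s$; $\mathrm{Post}(s,a)=\{s'\mid P(s,a,s')>0\}$. A strategy is $\sigma\colon S\to\mathrm{Act}$ with $\sigma(s)\in\mathrm{Act}(s)$, inducing a Markov chain with transitions $P(s,\sigma(s),\cdot)$; $\Pr^\sigma_s(\Diamond T)$ is the probability of visiting $T$ from $s$ and $\Pr^{\max}_s(\Diamond T)=\max_\sigma\Pr^\sigma_s(\Diamond T)$. $B^{\max}(x)(s)=1$ for $s\in T$ and $\max_{a\in\mathrm{Act}(s)}\sum_{s'\in\mathrm{Post}(s,a)}P(s,a,s')x(s')$ for $s\notin T$. The $x$-increasing actions of $s$ are $\mathrm{Act}_x(s)=\{a\in\mathrm{Act}(s)\mid x(s)\le\sum_{s'\in\mathrm{Post}(s,a)}P(s,a,s')x(s')\}$. $\mathbb{N}_\infty=\mathbb{N}\cup\{\infty\}$,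 $1+\infty=\infty$, minimum over the empty set is $\infty$. The operator $D^{\min}_x\colon\mathbb{N}_\infty^S\to\mathbb{N}_\infty^S$ is $D^{\min}_x(r)(s)=0$ for $s\in T$ and $1+\min_{a\in\mathrm{Act}_x(s)}\min_{s'\in\mathrm{Post}(s,a)}r(s')$ for $s\notin T$. *)

From HB Require Import structures.
From mathcomp Require Import all_boot all_order all_algebra.
From mathcomp Require Import boolp classical_sets reals.
Set Implicit Arguments. Unset Strict Implicit. Unset Printing Implicit Defensive.
Import Order.TTheory GRing.Theory Num.Theory.
Local Open Scope ring_scope.
Local Open Scope classical_set_scope.

Section MDP.
Variables (R : realType) (S Act : finType) (P : S -> Act -> S -> R) (T : {set S}).

Definition enabled (s : S) (a : Act) : bool := \sum_(s' : S) P s a s' == 1.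

Definition post (s : S) (a : Act) (s' : S) : bool := 0 < P s a s'.

Definition is_MDP : Prop :=
  [/\ (forall s a s', 0 <= P s a s' <= 1),
      (forall s a, \sum_(s' : S) P s a s' = 0 \/ \sum_(s' : S) P s a s' = 1)
    & (forall s, exists a, enabled s a)].

Definition is_strategy (sigma : S -> Act) : Prop := forall s, enabled s (sigma s).

Fixpoint reach_within (sigma : S -> Act) (n : nat) (s : S) : R :=
  if s \in T then 1 else
  match n with
  | 0 => 0
  | n'.+1 => \sum_(s' : S) P s (sigma s) s' * reach_within sigma n' s'
  end.

(* Pr^sigma_s(<> T): the probability of the (increasing) union of the events
   "T visited within n steps", i.e. the supremum of the step-bounded probabilities *)
Definition Pr_reach (sigma : S -> Act) (s : S) : R :=
  sup (range (fun n => reach_within sigma n s)).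

Definition Pr_max_reach (s : S) : R :=
  sup [set Pr_reach sigma s | sigma in [set sigma | is_strategy sigma]].

(* Bellman operator B^max (the max over the nonempty set Act(s) of values that are
   nonnegative whenever x >= 0, so starting the fold at 0 is harmless there) *)
Definition Bmax (x : S -> R) (s : S) : R :=
  if s \in T then 1 else
  \big[Num.max/0]_(a | enabled s a) \sum_(s' : S) P s a s' * x s'.

Definition incr_action (x : S -> R) (s : S) (a : Act) : bool :=
  enabled s a && (x s <= \sum_(s' : S) P s a s' * x s').

(* N_infinity = nat U {oo}, encoded as option nat with None = oo *)
Definition ninf := option nat.
Definition ninf_le (m n : ninf) : bool :=
  match m, n with
  | _, None => true
  | None, Some _ => false
  | Some a, Some b => (a <= b)%N
  end.
Definition ninf_min (m n : ninf) : ninf := if ninf_le m n then m else n.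
Definition ninf_succ (m : ninf) : ninf :=
  match m with Some k => Some k.+1 | None => None end.

(* D^min_x(r)(s): min over the empty set is oo (= None, the identity of the fold) *)
Definition Dmin (x : S -> R) (r : S -> ninf) (s : S) : ninf :=
  if s \in T then Some 0%N else
  ninf_succ (\big[ninf_min/None]_(a | incr_action x s a)
               \big[ninf_min/None]_(s' | post s a s') r s').

End MDP.

From mathcomp Require Import all_boot all_order all_algebra.
From mathcomp Require Import boolp classical_sets reals.
Set Implicit Arguments.
Unset Strict Implicit.
Unset Printing Implicit Defensive.
Import Order.TTheory GRing.Theory Num.Theory.
Local Open Scope ring_scope.

(* Conditions (1) and (3) yield a memoryless strategy sigma that, outside T,
   plays an x-increasing action which, whenever r(s) is finite, reaches with
   positive probability a state of smaller rank r.  Let y be the reachability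
   probability under sigma and suppose x - y attains a positive maximum m.  A
   state attaining m is not in T (y = 1 there), and since x is increasing and y
   is excessive along sigma, all its sigma-successors attain m as well.  As y >= 0,
   maximising states have x > 0, hence finite rank, and following rank-decreasing
   successors inside the set of maximising states is an infinite descent in nat. *)

Lemma big_ninf_min_le (I : finType) (A : pred I) (F : I -> ninf) k :
  ninf_le (\big[ninf_min/None]_(i | A i) F i) (Some k) ->
  exists2 i, A i & ninf_le (F i) (Some k).
Proof.
apply: (big_rec (fun v => ninf_le v (Some k) -> exists2 i, A i & ninf_le (F i) (Some k)))
  => // i v Ai IH; rewrite /ninf_min; case: ifP => _ le_k; [by exists i | exact: IH].
Qed.

Lemma convex_comb_max_support (R : realDomainType) (I : finType) (p z : I -> R) m j :
  (forall i, 0 <= p i) -> \sum_i p i = 1 -> (forall i, z i <= m) ->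
  m <= \sum_i p i * z i -> 0 < p j -> z j = m.
Proof.
move=> p_ge0 p_sum1 z_le m_le pj_gt0; apply/eqP; rewrite eq_le z_le /=.
rewrite leNgt; apply/negP => zj_lt.
have : 0 < \sum_i p i * (m - z i).
  rewrite (bigD1 j) //= ltr_pwDl ?mulr_gt0 ?subr_gt0 //.
  by apply: sumr_ge0 => i _; rewrite mulr_ge0 ?subr_ge0.
under eq_bigr do rewrite mulrBr.
by rewrite sumrB -mulr_suml p_sum1 mul1r subr_gt0 ltNge m_le.
Qed.

Section MDP.
Variables (R : realType) (S Act : finType) (P : S -> Act -> S -> R) (T : {set S}).
Hypothesis P_MDP : is_MDP P.

Lemma P_ge0 s a s' : 0 <= P s a s'.
Proof. by case: P_MDP => P01 _ _; case/andP: (P01 s a s'). Qed.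

Section Strategy.
Variable sigma : S -> Act.
Hypothesis sigma_strategy : is_strategy P sigma.

Local Notation reach := (reach_within P T sigma).
Local Notation Pr := (Pr_reach P T sigma).

Lemma reach_within_ge0 n s : 0 <= reach n s.
Proof.
elim: n s => [|n IH] s /=; case: ifP => // _.
by apply: sumr_ge0 => s' _; rewrite mulr_ge0 ?P_ge0.
Qed.

Lemma reach_within_le1 n s : reach n s <= 1.
Proof.
elim: n s => [|n IH] s /=; case: ifP => // _.
rewrite -(eqP (sigma_strategy s)); apply: ler_sum => s' _.
by rewrite ler_piMr ?P_ge0.
Qed.

Lemma reach_within_nondecreasing s : {homo reach^~ s : m n / (m <= n)%N >-> m <= n}.
Proof.
apply: (homo_leq lexx le_trans) => n.
elim: n s => [|n IH] s /=; case: ifP => // _.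
  by apply: sumr_ge0 => s' _; rewrite mulr_ge0 ?P_ge0 //; exact: (reach_within_ge0 0).
by apply: ler_sum => s' _; rewrite ler_wpM2l ?P_ge0 //; exact: IH.
Qed.

Lemma has_sup_reach_within s : has_sup (range (reach^~ s)).
Proof.
split; first by exists (reach 0 s), 0%N.
by exists 1 => _ [n _ <-]; exact: reach_within_le1.
Qed.

Lemma reach_within_le_Pr_reach n s : reach n s <= Pr s.
Proof. by apply: sup_upper_bound (has_sup_reach_within s) _ _; exists n. Qed.

Lemma Pr_reach_ge0 s : 0 <= Pr s.
Proof. exact: le_trans (reach_within_ge0 0 s) (reach_within_le_Pr_reach 0 s). Qed.

Lemma Pr_reach_le1 s : Pr s <= 1.
Proof.
apply: ge_sup; first by exists (reach 0 s), 0%N.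
by move=> _ [n _ <-]; exact: reach_within_le1.
Qed.

Lemma Pr_reach_mem s : s \in T -> Pr s = 1.
Proof.
move=> sT; apply/eqP; rewrite eq_le Pr_reach_le1 /=.
by have := reach_within_le_Pr_reach 0 s; rewrite /= sT.
Qed.

Lemma reach_within_uniform_approx eps : 0 < eps ->
  exists N, forall s, Pr s - eps <= reach N s.
Proof.
move=> eps_gt0; have /choice [N approx] : forall s, exists n, Pr s - eps < reach n s.
  by move=> s; have [_ [n _ <-]] := sup_adherent eps_gt0 (has_sup_reach_within s); exists n.
exists (\max_s N s) => s; apply: le_trans (ltW (approx s)) _.
exact/reach_within_nondecreasing/leq_bigmax.
Qed.

(* Equality holds too, but excessiveness suffices and needs no exchange of limit and sum. *)
Lemma Pr_reach_excessive s : s \notin T ->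
  \sum_s' P s (sigma s) s' * Pr s' <= Pr s.
Proof.
move=> sNT; apply/ler_addgt0Pr => eps eps_gt0.
have [N approx] := reach_within_uniform_approx eps_gt0.
apply: le_trans (lerD (reach_within_le_Pr_reach N.+1 s) (lexx eps)).
have -> : eps = \sum_s' P s (sigma s) s' * eps.
  by rewrite -mulr_suml (eqP (sigma_strategy s)) mul1r.
rewrite /= (negbTE sNT) -big_split /=; apply: ler_sum => s' _.
by rewrite -mulrDr ler_wpM2l ?P_ge0 // -lerBlDr.
Qed.

End Strategy.

Lemma Pr_reach_le_Pr_max_reach sigma s :
  is_strategy P sigma -> Pr_reach P T sigma s <= Pr_max_reach P T s.
Proof.
move=> sigma_strategy; apply: sup_upper_bound; last by exists sigma.
split; first by exists (Pr_reach P T sigma s), sigma.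
by exists 1 => _ [tau tau_strategy <-]; exact: Pr_reach_le1.
Qed.

Section Ranking.
Variables (x : S -> R) (r : S -> ninf).
Hypothesis x01 : forall s, 0 <= x s <= 1.
Hypothesis r_Dmin : forall s, ninf_le (Dmin P T x r s) (r s).
Hypothesis r_finite : forall s, s \notin T -> 0 < x s -> r s != None.

Definition decreases_rank (s : S) (a : Act) : Prop :=
  forall k, r s = Some k -> exists s' j, [/\ post P s a s', r s' = Some j & (j < k)%N].

Lemma Dmin_witness s k : s \notin T -> r s = Some k ->
  exists a s' j, [/\ incr_action P x s a, post P s a s', r s' = Some j & (j < k)%N].
Proof.
move=> sNT rs; have := r_Dmin s; rewrite /Dmin (negbTE sNT) rs.
set b := \big[ninf_min/None]_(a | _) _.
case Eb: b => [j|] //= jk.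
have /big_ninf_min_le [a incr_a] : ninf_le b (Some j) by rewrite Eb /= leqnn.
case/big_ninf_min_le => s' post_s'; case rs': (r s') => [j'|] //= j'j.
by exists a, s', j'; split=> //; exact: leq_ltn_trans jk.
Qed.

Lemma exists_ranking_strategy : exists sigma, is_strategy P sigma /\
  forall s, s \notin T -> incr_action P x s (sigma s) /\ decreases_rank s (sigma s).
Proof.
have /choice [sigma sigmaP] : forall s, exists a, enabled P s a /\
    (s \notin T -> incr_action P x s a /\ decreases_rank s a).
  move=> s; have [_ _ /(_ s) [a0 en_a0]] := P_MDP.
  have [sT|sNT] := boolP (s \in T); first by exists a0.
  case rs: (r s) => [k|].
    have [a [s' [j [incr_a post_s' rs' jk]]]] := Dmin_witness sNT rs.
    exists a; split=> [|_]; first by case/andP: incr_a.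
    by split=> // k'; rewrite rs => -[<-]; exists s', j.
  have xs0 : x s <= 0 by rewrite leNgt; apply/negP => /(r_finite sNT); rewrite rs.
  exists a0; split=> // _; split; last by move=> k; rewrite rs.
  rewrite /incr_action en_a0 /=.
  apply: le_trans xs0 (sumr_ge0 _ _) => s' _.
  by rewrite mulr_ge0 ?P_ge0 //; case/andP: (x01 s').
by exists sigma; split=> [s|s sNT]; [case: (sigmaP s) | case: (sigmaP s) => _ /(_ sNT)].
Qed.

Variable sigma : S -> Act.
Hypothesis sigma_strategy : is_strategy P sigma.
Hypothesis sigma_ranking :
  forall s, s \notin T -> incr_action P x s (sigma s) /\ decreases_rank s (sigma s).

Local Notation excess s := (x s - Pr_reach P T sigma s).

Lemma excess_max_closed m s s' : (forall t, excess t <= m) ->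
  excess s = m -> s \notin T -> post P s (sigma s) s' -> excess s' = m.
Proof.
move=> le_m es sNT post_s'.
have /andP [en incr] := (sigma_ranking sNT).1.
apply: (convex_comb_max_support (@P_ge0 s (sigma s)) (eqP en) le_m) => //.
under eq_bigr do rewrite mulrBr; rewrite sumrB -es.
exact: lerB incr (Pr_reach_excessive sigma_strategy sNT).
Qed.

Lemma le_Pr_reach_ranking s0 : x s0 <= Pr_reach P T sigma s0.
Proof.
rewrite leNgt; apply/negP => lt_s0.
have [i _ max_i] := @arg_maxP _ R S s0 predT (fun s => excess s) isT.
have le_m t : excess t <= excess i by exact: max_i.
have m_gt0 : 0 < excess i by apply: lt_le_trans (le_m s0); rewrite subr_gt0.
have maxNT t : excess t = excess i -> t \notin T.
  move=> et; apply: contraTN m_gt0 => tT.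
  by rewrite -et Pr_reach_mem // subr_gt0 -leNgt; case/andP: (x01 t).
have max_no_rank k t : excess t = excess i -> r t <> Some k.
  elim/ltn_ind: k t => k IH t et rt.
  have [_ /(_ k rt) [t' [j [post_t' rt' jk]]]] := sigma_ranking (maxNT t et).
  exact: IH jk t' (excess_max_closed le_m et (maxNT t et) post_t') rt'.
have xi_gt0 : 0 < x i.
  by apply: lt_le_trans m_gt0 _; rewrite gerBl Pr_reach_ge0.
have := r_finite (maxNT i erefl) xi_gt0.
by case ri: (r i) => [k|] // _; exact: max_no_rank ri.
Qed.

End Ranking.
End MDP.

Theorem proposition6 (R : realType) (S Act : finType) (P : S -> Act -> S -> R)
    (T : {set S}) (x : S -> R) (r : S -> ninf) :
  is_MDP P ->
  (forall s, 0 <= x s <= 1) ->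
  (forall s, ninf_le (Dmin P T x r s) (r s)) ->
  (forall s, x s <= Bmax P T x s) ->
  (forall s, s \notin T -> 0 < x s -> r s != None) ->
  forall s, x s <= Pr_max_reach P T s.
Proof.
move=> P_MDP x01 r_Dmin _ r_finite s.
have [sigma [sigma_strategy sigma_ranking]] :=
  exists_ranking_strategy P_MDP x01 r_Dmin r_finite.
apply: le_trans (Pr_reach_le_Pr_max_reach T P_MDP s sigma_strategy).
exact: (le_Pr_reach_ranking P_MDP x01 r_finite sigma_strategy sigma_ranking s).
Qed.
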